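(* Every totally cyclic directed graph $\vec G$ (without loops and without parallel or antiparallel edges) whose underlying simple graph is three-edge-connected can be twisted, i.e. there exist a partial order $\prec$ on its edge set and a set $A$ such that $(\vec G,G,\prec,A)$ is a twisted graph.
   Context: Signed sets on a finite set $E$: pairs $X=(X^+,X^-)$ of disjoint subsets, $X(e)=+1,-1,0$ according as $e\in X^+$, $e\in X^-$, or neither; support $\underline X=X^+\cup X^-$; $-X=(X^-,X^+)$. Signed sets $X,Y$ are conformal if there is no $e$ with $X(e)=-Y(e)\neq0$; the composition is $(X\circ Y)(e)=X(e)$ if $X(e)\ne0$ and $Y(e)$ otherwise. For a total order $<$ on $E$, $\mathcal C(<)=\{(\{e_1,e_3\},\{e_2\}),(\{e_2\},\{e_1,e_3\}):e_1<e_2<e_3\}$, the signed circuits of the rank 2 oriented matroid $\mathcal M(<)$; its vectors are compositions of families of pairwise conformal members of $\mathcal C(<)$. For a partial order $\prec$ on $E$, $\mathcal C(\prec)$ is the intersection of $\mathcal C(<)$ over all total orders $<$ extending $\prec$. Let $\vec G=(V,\vec E)$ be a directed graph (no loops, no parallel or antiparallel edges) with underlying simple graph $G=(V,E)$, edges of $G$ and $\vec G$ identified. The circuits of the dual graphic oriented matroid $\mathcal M^*(\vec G)$ are the signed minimal cuts $\big(\{(u,w):u\in S,w\notin S\},\{(u,w):w\in S,u\notin S\}\big)$, $S\subset V$ with $S$ and $V\setminus S$ inducing connected subgraphs; a strong map $\mathcal M^*(\vec G)\to\mathcal M(<)$ means every such signed cut is a vector of $\mathcal M(<)$. For $v\in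 V$ let $C^*_v=(\{(u,v)\in\vec E\},\{(v,u)\in\vec E\})$. A twisted graph $T=(\vec G,G,\prec,A)$ consists of such $\vec G$, a partial order $\prec$ on $E$ and a set $A$ with: (1) $G$ is three-edge-connected; (2) $A\subset\mathcal C(\prec)$; (3) for every total order $<$ extending $\prec$ there is a strong map $\mathcal M^*(\vec G)\to\mathcal M(<)$; (4) $A$ can be partitioned as $\{A_v:v\in V\}$ such that for each $v$ the members of $A_v$ are pairwise conformal and their composition is $C^*_v$. A directed graph is totally cyclic if every edge lies in a directed cycle. *)

From mathcomp Require Import all_boot.
Set Implicit Arguments. Unset Strict Implicit. Unset Printing Implicit Defensive.

Section Defs.
Variable V : finType.

Definition no_loops (d : rel V) : Prop := forall u, ~~ d u u.
Definition no_antiparallel (d : rel V) : Prop := forall u v, d u v -> ~~ d v u.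

(* Edges of the directed graph (identified with edges of the underlying graph). *)
Definition Edge (d : rel V) := {p : V * V | d p.1 p.2}.

(* Signed sets on a finite type E: (X^+, X^-). *)
Definition sset (E : finType) := ({set E} * {set E})%type.

Definition conformal (E : finType) (X Y : sset E) : bool :=
  [disjoint X.1 & Y.2] && [disjoint X.2 & Y.1].

Definition scomp (E : finType) (X Y : sset E) : sset E :=
  (X.1 :|: (Y.1 :\: X.2), X.2 :|: (Y.2 :\: X.1)).

Definition scomp_seq (E : finType) (s : seq (sset E)) : sset E :=
  foldr (@scomp E) (set0, set0) s.

Definition strict_total (E : finType) (lt : rel E) : Prop :=
  irreflexive lt /\ transitive lt /\ (forall x y, x != y -> lt x y || lt y x).

Definition strict_partial (E : finType) (prec : rel E) : Prop :=
  irreflexive prec /\ transitive prec.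

Definition extends (E : finType) (prec lt : rel E) : Prop :=
  forall x y, prec x y -> lt x y.

(* C(<) : signed circuits of the rank 2 oriented matroid M(<) *)
Definition circ_tot (E : finType) (lt : rel E) (X : sset E) : Prop :=
  exists e1 e2 e3, [/\ lt e1 e2, lt e2 e3 &
    (X = ([set e1; e3], [set e2]) \/ X = ([set e2], [set e1; e3]))].

Definition vector_tot (E : finType) (lt : rel E) (X : sset E) : Prop :=
  exists s : seq (sset E),
    [/\ forall Y, Y \in s -> circ_tot lt Y,
        forall Y Z, Y \in s -> Z \in s -> conformal Y Z &
        X = scomp_seq s].

Definition circ_part (E : finType) (prec : rel E) (X : sset E) : Prop :=
  forall lt : rel E, strict_total lt -> extends prec lt -> circ_tot lt X.

Definition adj_minus (d : rel V) (F : {set Edge d}) : rel V :=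
  fun u v => [exists e : Edge d,
    (e \notin F) && ((val e == (u, v)) || (val e == (v, u)))].

Definition adj (d : rel V) : rel V := adj_minus (set0 : {set Edge d}).

Definition three_edge_connected (d : rel V) : Prop :=
  forall F : {set Edge d}, #|F| <= 2 -> forall u v, connect (adj_minus F) u v.

Definition totally_cyclic (d : rel V) : Prop :=
  forall u v, d u v -> connect d v u.

Definition induces_connected (d : rel V) (S : {set V}) : Prop :=
  S != set0 /\
  forall u v, u \in S -> v \in S ->
    connect [rel x y | [&& x \in S, y \in S & adj d x y]] u v.

Definition signed_cut (d : rel V) (S : {set V}) : sset (Edge d) :=
  ([set e : Edge d | ((val e).1 \in S) && ((val e).2 \notin S)],
   [set e : Edge d | ((val e).2 \in S) && ((val e).1 \notin S)]).

Definition cocircuit (d : rel V) (X : sset (Edge d)) : Prop :=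
  exists S : {set V}, [/\ induces_connected d S, induces_connected d (~: S) &
                          X = @signed_cut d S].

Definition strong_map (d : rel V) (lt : rel (Edge d)) : Prop :=
  forall X, @cocircuit d X -> vector_tot lt X.

Definition Cstar (d : rel V) (v : V) : sset (Edge d) :=
  ([set e : Edge d | (val e).2 == v], [set e : Edge d | (val e).1 == v]).

Definition twisted (d : rel V) (prec : rel (Edge d)) (A : {set sset (Edge d)}) : Prop :=
  [/\ three_edge_connected d,
      forall X, X \in A -> circ_part prec X,
      forall lt : rel (Edge d), strict_total lt -> extends prec lt -> @strong_map d lt &
      exists P : V -> {set sset (Edge d)},
        [/\ A = \bigcup_(v : V) P v,
            forall u v, u != v -> [disjoint P u & P v],
            forall v X Y, X \in P v -> Y \in P v -> conformal X Y &
            forall v, scomp_seq (enum (P v)) = @Cstar d v]].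

End Defs.

Arguments twisted {V} d prec A.
Arguments strong_map {V} d lt.
Arguments cocircuit {V} d X.
Arguments Cstar {V} d v.
Arguments signed_cut {V} d S.

(* Realise the edges as vectors in the plane. A totally cyclic graph carries an
   integer circulation w that is positive on every edge, and in a
   three-edge-connected graph any two edges e <> f are separated by a cycle
   through e avoiding f; a suitable integer combination of such cycles is a
   circulation g for which the slopes g(e)/w(e) are pairwise distinct.  The total
   order of the edges by slope serves as the partial order.  Since w and g have
   zero net flow across every cut, along the slope order the signs of a cut change
   at least twice: some leaving edge precedes an entering one and vice versa.
   Hence every edge of a cut lies in a circuit e1 < e2 < e3 of M(<) conformal to
   the cut, and the cut is the composition of these circuits.  The set A collects,
   for every vertex v, the circuits conformal to the star C*_v; two stars share at
   most one edge while a circuit has at least two, so these families are disjoint. *)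

From mathcomp Require Import all_boot all_order all_algebra.
From mathcomp Require Import zify ring.
Set Implicit Arguments. Unset Strict Implicit. Unset Printing Implicit Defensive.
Import Order.TTheory GRing.Theory Num.Theory.

Definition ssupp (T : finType) (X : sset T) : {set T} := X.1 :|: X.2.

Definition sopp (T : finType) (X : sset T) : sset T := (X.2, X.1).

Lemma bigcup_seq_subset (I : eqType) (T : finType) (s : seq I) (F : I -> {set T})
    (B : {set T}) :
  (forall i, i \in s -> F i \subset B) -> \bigcup_(i <- s) F i \subset B.
Proof.
elim: s => [|i s IHs] sB; first by rewrite big_nil sub0set.
by rewrite big_cons subUset sB ?mem_head // IHs // => j js; rewrite sB // inE js orbT.
Qed.

Lemma scomp_seq_bigcup (T : finType) (X : sset T) (s : seq (sset T)) :
  [disjoint X.1 & X.2] ->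
  (forall Y, Y \in s -> (Y.1 \subset X.1) && (Y.2 \subset X.2)) ->
  scomp_seq s = (\bigcup_(Y <- s) Y.1, \bigcup_(Y <- s) Y.2).
Proof.
move=> X_disj; elim: s => [|Y s IHs] sX /=; first by rewrite !big_nil.
have /andP [Y1 Y2] := sX Y (mem_head _ _).
have {}sX Z : Z \in s -> (Z.1 \subset X.1) && (Z.2 \subset X.2).
  by move=> Zs; apply: sX; rewrite inE Zs orbT.
have sX1 : \bigcup_(Z <- s) Z.1 \subset X.1.
  by apply: bigcup_seq_subset => Z /sX /andP [].
have sX2 : \bigcup_(Z <- s) Z.2 \subset X.2.
  by apply: bigcup_seq_subset => Z /sX /andP [].
rewrite IHs // /scomp /= !big_cons (setDidPl _) ?(setDidPl _) //.
- by apply: disjointWl sX2 _; apply: disjointWr Y1 _; rewrite disjoint_sym.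
- exact: disjointWl sX1 (disjointWr Y2 X_disj).
Qed.

Section Circuits.
Variables (T : finType) (lt : rel T).

Definition circuitb (Y : sset T) : bool :=
  [exists e1, exists e2, exists e3, [&& lt e1 e2, lt e2 e3 &
    (Y == ([set e1; e3], [set e2])) || (Y == ([set e2], [set e1; e3]))]].

Lemma circuitP Y : reflect (circ_tot lt Y) (circuitb Y).
Proof.
apply: (iffP idP).
  case/existsP=> e1 /existsP [e2 /existsP [e3 /and3P [l12 l23 /orP [] /eqP ->]]].
  - by exists e1, e2, e3; split; [..| left].
  - by exists e1, e2, e3; split; [..| right].
case=> e1 [e2 [e3 [l12 l23 HY]]].
apply/existsP; exists e1; apply/existsP; exists e2; apply/existsP; exists e3.
by rewrite l12 l23; case: HY => ->; rewrite eqxx ?orbT.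
Qed.

Lemma circuitb_opp Y : circuitb Y -> circuitb (sopp Y).
Proof.
move/circuitP=> [e1 [e2 [e3 [l12 l23 HY]]]]; apply/circuitP; exists e1, e2, e3.
by split=> //; case: HY => ->; [right | left].
Qed.

Lemma circuit_extends (lt' : rel T) Y :
  extends lt lt' -> circuitb Y -> circ_tot lt' Y.
Proof.
move=> ext /circuitP [e1 [e2 [e3 [l12 l23 HY]]]].
by exists e1, e2, e3; split; rewrite ?ext.
Qed.

Lemma card_ssupp_circuit Y : irreflexive lt -> circuitb Y -> 1 < #|ssupp Y|.
Proof.
move=> lt_irr /existsP [e1 /existsP [e2 /existsP [e3 /and3P [l12 _ HY]]]].
have e12 : e1 != e2 by apply: contraTneq l12 => ->; rewrite lt_irr.
apply: leq_trans (subset_leq_card (_ : [set e1; e2] \subset _)).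
  by rewrite cards2 e12.
by apply/subsetP => e; rewrite /ssupp !inE; case/orP: HY => /eqP -> /=;
   rewrite !inE => /orP [] ->; rewrite ?orbT.
Qed.

Definition conformal_circuits (X : sset T) : {set sset T} :=
  [set Y | [&& circuitb Y, Y.1 \subset X.1 & Y.2 \subset X.2]].

Lemma conformal_circuitsW (X Y : sset T) :
  Y \in conformal_circuits X -> ssupp Y \subset ssupp X.
Proof. by rewrite inE => /and3P [_ Y1 Y2]; apply: setUSS. Qed.

Lemma conformal_circuits_conformal (X Y Z : sset T) : [disjoint X.1 & X.2] ->
  Y \in conformal_circuits X -> Z \in conformal_circuits X -> conformal Y Z.
Proof.
rewrite !inE => X_disj /and3P [_ Y1 Y2] /and3P [_ Z1 Z2].
rewrite /conformal (disjointWl Y1 (disjointWr Z2 X_disj)).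
by rewrite (disjointWl Y2 (disjointWr Z1 _)) // disjoint_sym.
Qed.

Lemma conformal_circuits_disjoint (X X' : sset T) : irreflexive lt ->
  #|ssupp X :&: ssupp X'| <= 1 ->
  [disjoint conformal_circuits X & conformal_circuits X'].
Proof.
move=> lt_irr small; apply/pred0P => Y /=; apply/negbTE/andP => -[YX YX'].
have Ycirc : circuitb Y by move: YX; rewrite inE => /andP [].
have YXX' : ssupp Y \subset ssupp X :&: ssupp X' by rewrite subsetI !conformal_circuitsW.
have := card_ssupp_circuit lt_irr Ycirc.
by rewrite ltnNge (leq_trans (subset_leq_card YXX') small).
Qed.
End Circuits.

Section TotalOrder.
Variables (T : finType) (lt : rel T).
Hypothesis lt_total : forall x y, x != y -> lt x y || lt y x.

Definition two_sign_changes (X : sset T) : Prop :=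
  (exists p q, [/\ p \in X.1, q \in X.2 & lt q p]) /\
  (exists p q, [/\ p \in X.1, q \in X.2 & lt p q]).

Lemma two_sign_changes_opp (X : sset T) : two_sign_changes X -> two_sign_changes (sopp X).
Proof.
case=> [[p [q [pX qX lqp]]] [p' [q' [p'X q'X lpq']]]].
by split; [exists q', p' | exists q, p].
Qed.

Lemma conformal_circuits_opp (X Y : sset T) :
  Y \in conformal_circuits lt (sopp X) -> sopp Y \in conformal_circuits lt X.
Proof. by rewrite !inE => /and3P [/circuitb_opp -> Y1 Y2]; apply/and3P. Qed.

Lemma conformal_circuit_cover (X : sset T) e : [disjoint X.1 & X.2] -> two_sign_changes X ->
  e \in X.1 -> exists2 Y, Y \in conformal_circuits lt X & e \in Y.1.
Proof.
move=> X_disj [[p1 [q1 [p1X q1X lq1p1]]] [p2 [q2 [p2X q2X lp2q2]]]] eX.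
have lt_cmp q : q \in X.2 -> ~~ lt e q -> lt q e.
  move=> qX /negbTE nleq; have eq : e != q.
    by apply: contraTneq qX => <-; rewrite (disjointFr X_disj eX).
  by have := lt_total eq; rewrite nleq.
have mem_cc Y : circuitb lt Y -> Y.1 \subset X.1 -> Y.2 \subset X.2 ->
    Y \in conformal_circuits lt X.
  by move=> *; rewrite inE; apply/and3P.
have [leq1|/(lt_cmp _ q1X) lq1e] := boolP (lt e q1).
  exists ([set e; p1], [set q1]); last by rewrite !inE eqxx.
  apply: mem_cc; last by rewrite sub1set.
  - by apply/circuitP; exists e, q1, p1; split => //; left.
  - by rewrite subUset !sub1set eX p1X.
have [leq2|/(lt_cmp _ q2X) lq2e] := boolP (lt e q2).
  exists ([set e], [set q1; q2]); last by rewrite !inE eqxx.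
  apply: mem_cc; first by apply/circuitP; exists q1, e, q2; split => //; right.
  - by rewrite sub1set.
  - by rewrite subUset !sub1set q1X q2X.
exists ([set p2; e], [set q2]); last by rewrite !inE eqxx orbT.
apply: mem_cc; last by rewrite sub1set.
- by apply/circuitP; exists p2, q2, e; split => //; left.
- by rewrite subUset !sub1set eX p2X.
Qed.

Lemma scomp_conformal_circuits (X : sset T) : [disjoint X.1 & X.2] ->
  (ssupp X != set0 -> two_sign_changes X) ->
  scomp_seq (enum (conformal_circuits lt X)) = X.
Proof.
move=> X_disj X_alt.
rewrite (scomp_seq_bigcup X_disj) => [|Y]; last by rewrite mem_enum inE => /and3P [_ -> ->].
rewrite !big_enum /=.
have alt e : e \in ssupp X -> two_sign_changes X.
  by move=> eX; apply: X_alt; apply/set0Pn; exists e.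
have cover1 e : e \in X.1 -> exists2 Y, Y \in conformal_circuits lt X & e \in Y.1.
  by move=> eX; apply: conformal_circuit_cover => //; apply: (alt e); rewrite /ssupp inE eX.
have cover2 e : e \in X.2 -> exists2 Y, Y \in conformal_circuits lt X & e \in Y.2.
  move=> eX; have [|||Y YX eY] := conformal_circuit_cover (X := sopp X) (e := e) => //.
  - by rewrite disjoint_sym.
  - by apply: two_sign_changes_opp; apply: (alt e); rewrite /ssupp inE eX orbT.
  - by exists (sopp Y); first exact: conformal_circuits_opp.
case: X X_disj {X_alt alt} cover1 cover2 => P N /= _ cover1 cover2.
congr pair; apply/eqP; rewrite eqEsubset; apply/andP; split.
- by apply/bigcupsP => Y; rewrite inE => /and3P [].
- by apply/subsetP => e /cover1 [Y YX eY]; apply/bigcupP; exists Y.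
- by apply/bigcupsP => Y; rewrite inE => /and3P [].
- by apply/subsetP => e /cover2 [Y YX eY]; apply/bigcupP; exists Y.
Qed.

Lemma vector_conformal_circuits (lt' : rel T) (X : sset T) : extends lt lt' ->
  [disjoint X.1 & X.2] -> scomp_seq (enum (conformal_circuits lt X)) = X ->
  vector_tot lt' X.
Proof.
move=> ext X_disj X_scomp; exists (enum (conformal_circuits lt X)); split => //.
- by move=> Y; rewrite mem_enum inE => /andP [/(circuit_extends ext)].
- by move=> Y Z; rewrite !mem_enum; apply: conformal_circuits_conformal.
Qed.
End TotalOrder.

Local Open Scope ring_scope.

Definition distinct_slopes (T : eqType) (w g : T -> int) : Prop :=
  forall e f, e != f -> g e * w f != g f * w e.

Section Slopes.
Variables (T : finType) (w g : T -> int).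
Hypothesis w_gt0 : forall e, 0 < w e.

Definition slope_lt : rel T := fun e f => g e * w f < g f * w e.

Lemma slope_lt_irr : irreflexive slope_lt.
Proof. by move=> e; rewrite /slope_lt ltxx. Qed.

Lemma slope_lt_trans : transitive slope_lt.
Proof.
move=> b a c; rewrite /slope_lt => lab lbc.
have := w_gt0 a; have := w_gt0 b; have := w_gt0 c; nia.
Qed.

Lemma slope_lt_total : distinct_slopes w g ->
  forall e f, e != f -> slope_lt e f || slope_lt f e.
Proof.
move=> gen e f /gen; rewrite /slope_lt.
by case: ltgtP.
Qed.

Lemma sum_gt0 (A : {set T}) (F : T -> int) :
  A != set0 -> (forall e, e \in A -> 0 < F e) -> 0 < \sum_(e in A) F e.
Proof.
case/set0Pn => e eA F_gt0; rewrite (bigD1 e) //=.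
by apply: ltr_wpDr (F_gt0 e eA); apply: sumr_ge0 => f /andP [fA _]; exact/ltW/F_gt0.
Qed.

Lemma sum_w_eq0 (A : {set T}) : (\sum_(e in A) w e == 0) = (A == set0).
Proof.
have [->|A0] := eqVneq A set0; first by rewrite big_set0 eqxx.
by rewrite gt_eqF // sum_gt0.
Qed.

Lemma balanced_descent (P N : {set T}) : distinct_slopes w g -> [disjoint P & N] ->
  \sum_(e in P) w e = \sum_(e in N) w e -> \sum_(e in P) g e = \sum_(e in N) g e ->
  P :|: N != set0 -> exists p q, [/\ p \in P, q \in N & slope_lt q p].
Proof.
move=> gen PN_disj Pw Pg.
rewrite setU_eq0 -sum_w_eq0 Pw sum_w_eq0 andbb => N0.
have P0 : P != set0 by rewrite -sum_w_eq0 Pw sum_w_eq0.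
have [/exists_inP [p pP /exists_inP [q qN lqp]]|none] :=
  boolP [exists p in P, exists q in N, slope_lt q p]; first by exists p, q.
have lpq p q : p \in P -> q \in N -> slope_lt p q.
  move=> pP qN; have pq : p != q.
    by apply: contraTneq qN => <-; rewrite (disjointFr PN_disj pP).
  have nlqp : ~~ slope_lt q p.
    apply: contra none => lqp.
    by apply/exists_inP; exists p => //; apply/exists_inP; exists q.
  by have := slope_lt_total gen pq; rewrite (negbTE nlqp) orbF.
(* If every element of P preceded every element of N, this double sum would be
   positive, while balance makes it vanish. *)
have : 0 < \sum_(p in P) \sum_(q in N) (g q * w p - g p * w q).
  by apply: sum_gt0 => // p pP; apply: sum_gt0 => // q qN; rewrite subr_gt0; apply: lpq.
under eq_bigr => p _ do rewrite sumrB -mulr_suml -mulr_sumr.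
by rewrite sumrB -mulr_sumr -mulr_suml -Pw -Pg mulrC subrr ltxx.
Qed.

Lemma balanced_scomp (X : sset T) : distinct_slopes w g -> [disjoint X.1 & X.2] ->
  \sum_(e in X.1) w e = \sum_(e in X.2) w e -> \sum_(e in X.1) g e = \sum_(e in X.2) g e ->
  scomp_seq (enum (conformal_circuits slope_lt X)) = X.
Proof.
move=> gen X_disj Xw Xg; apply: scomp_conformal_circuits => // [|X0].
  exact: slope_lt_total.
split; first exact: balanced_descent.
have [|//|q [p [qX pX lpq]]] := balanced_descent gen _ (esym Xw) (esym Xg).
- by rewrite disjoint_sym.
- by rewrite setUC.
- by exists p, q.
Qed.
End Slopes.

Lemma mul_addr_neq0 (N a b : int) : `|b| < N -> (a != 0) || (b != 0) -> N * a + b != 0.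
Proof.
move=> bN; have [->|a0] := eqVneq a 0; first by rewrite mulr0 add0r.
by move=> _; apply/eqP => H; nia.
Qed.

Section LinearCombinations.
Variables (T : finType) (C : (T -> int) -> Prop).
Hypotheses (C0 : C (fun=> 0))
           (C_comb : forall c g h, C g -> C h -> C (fun e => c * g e + h e)).

Lemma exists_positive :
  (forall e, exists2 h, C h & (forall f, 0 <= h f) /\ 0 < h e) ->
  exists2 w, C w & forall e, 0 < w e.
Proof.
move=> pos.
have cover (l : seq T) : exists2 w, C w & (forall f, 0 <= w f) /\ {in l, forall e, 0 < w e}.
  elim: l => [|e l [w Cw [w_ge0 w_gt0]]]; first by exists (fun=> 0).
  have [h Ch [h_ge0 he_gt0]] := pos e.
  exists (fun f => 1 * w f + h f); first exact: C_comb.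
  split=> [f|f]; first by rewrite mul1r addr_ge0.
  rewrite inE mul1r => /orP [/eqP ->|/w_gt0 wf]; first by have := w_ge0 e; lia.
  by have := h_ge0 f; lia.
have [w Cw [_ w_gt0]] := cover (enum T).
by exists w => // e; apply: w_gt0; rewrite mem_enum.
Qed.

Variable w : T -> int.
Let gap (h : T -> int) (q : T * T) := h q.1 * w q.2 - h q.2 * w q.1.

Lemma exists_distinct_slopes :
  (forall e f, e != f -> exists2 h, C h & h e * w f != h f * w e) ->
  exists2 g, C g & distinct_slopes w g.
Proof.
move=> sep.
have cover (l : seq (T * T)) :
    {in l, forall q, q.1 != q.2} -> exists2 g, C g & {in l, forall q, gap g q != 0}.
  elim: l => [|q l IHl] l_neq; first by exists (fun=> 0).
  have [|g Cg g_gap] := IHl; first by move=> q' q'l; apply: l_neq; rewrite inE q'l orbT.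
  have [h Ch h_gap] := sep _ _ (l_neq q (mem_head _ _)).
  (* N dominates every gap of h, so N * g + h keeps the nonzero gaps of g and gains
     those of h. *)
  pose N := 1 + \sum_(q' : T * T) `|gap h q'|.
  exists (fun e => N * g e + h e); first exact: C_comb.
  move=> q' q'l; have -> : gap (fun e => N * g e + h e) q' = N * gap g q' + gap h q'.
    by rewrite /gap /=; ring.
  apply: mul_addr_neq0.
    by rewrite /N (bigD1 q') //= ltz1D lerDl sumr_ge0.
  case/predU1P: q'l => [->|/g_gap ->] //.
  by apply/orP; right; rewrite /gap /= subr_eq0.
have [|g Cg g_gap] := cover [seq q <- enum {: T * T} | q.1 != q.2].
  by move=> q; rewrite mem_filter => /andP [].
exists g => // e f ef; rewrite -subr_eq0.
by apply: (g_gap (e, f)); rewrite mem_filter ef mem_enum.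
Qed.
End LinearCombinations.

Section Circulations.
Variables (V : finType) (d : rel V).
Hypothesis d_asym : no_antiparallel d.
Local Notation E := (Edge d).

Definition cut_flow (S : {set V}) (h : E -> int) : int :=
  \sum_(e in (signed_cut d S).1) h e - \sum_(e in (signed_cut d S).2) h e.

Definition circulation (h : E -> int) : Prop := forall S, cut_flow S h = 0.

Lemma cut_flow_eq S h h' : h =1 h' -> cut_flow S h = cut_flow S h'.
Proof. by move=> hh'; rewrite /cut_flow !(eq_bigr _ (fun e _ => hh' e)). Qed.

Lemma cut_flowD S g h : cut_flow S (fun e => g e + h e) = cut_flow S g + cut_flow S h.
Proof. by rewrite /cut_flow !big_split /=; ring. Qed.

Lemma cut_flowZ S c h : cut_flow S (fun e => c * h e) = c * cut_flow S h.
Proof. by rewrite /cut_flow -!mulr_sumr mulrBr. Qed.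

Lemma cut_flowN S h : cut_flow S (fun e => - h e) = - cut_flow S h.
Proof. by rewrite /cut_flow !sumrN; ring. Qed.

Lemma circulation0 : circulation (fun=> 0).
Proof. by move=> S; rewrite /cut_flow !big1. Qed.

Lemma circulation_comb c g h :
  circulation g -> circulation h -> circulation (fun e => c * g e + h e).
Proof. by move=> Cg Ch S; rewrite cut_flowD cut_flowZ Cg Ch mulr0 addr0. Qed.

Lemma circulation_balance h S : circulation h ->
  \sum_(e in (signed_cut d S).1) h e = \sum_(e in (signed_cut d S).2) h e.
Proof. by move/(_ S)/eqP; rewrite subr_eq0 => /eqP. Qed.

Lemma signed_cut_disjoint S : [disjoint (signed_cut d S).1 & (signed_cut d S).2].
Proof.
by apply/pred0P => e /=; rewrite !inE; case: ((val e).1 \in S); case: ((val e).2 \in S).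
Qed.

Lemma cut_flow_edge S e0 :
  cut_flow S (fun e => (e == e0)%:Z) = ((val e0).1 \in S)%:Z - ((val e0).2 \in S)%:Z.
Proof.
have sum_pred1 (A : {set E}) : \sum_(e in A) (e == e0)%:Z = (e0 \in A)%:Z.
  have [e0A|e0A] := boolP (e0 \in A).
    by rewrite (bigD1 e0) //= eqxx big1 ?addr0 // => e /andP [_ /negbTE ->].
  by rewrite big1 // => e eA; case: eqP eA => // ->; rewrite (negbTE e0A).
rewrite /cut_flow !sum_pred1 !inE.
by case: ((val e0).1 \in S); case: ((val e0).2 \in S).
Qed.

Lemma arc_neq (e : E) : (val e).1 != (val e).2.
Proof. by apply/eqP => ee; move: (valP e) (d_asym (valP e)); rewrite ee => ->. Qed.

Definition arc_flow (x y : V) (e : E) : int :=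
  (val e == (x, y))%:Z - (val e == (y, x))%:Z.

Lemma arc_flowC x y e : arc_flow y x e = - arc_flow x y e.
Proof. by rewrite /arc_flow opprB. Qed.

Lemma arc_flow_edge e0 e : arc_flow (val e0).1 (val e0).2 e = (e == e0)%:Z.
Proof.
rewrite /arc_flow -surjective_pairing (inj_eq val_inj).
have -> : (val e == ((val e0).2, (val e0).1)) = false.
  by apply/negbTE/eqP => ev; move: (valP e) (d_asym (valP e0)); rewrite ev /= => ->.
by rewrite subr0.
Qed.

Lemma arc_flow_eq0 x y e0 f :
  (val e0 == (x, y)) || (val e0 == (y, x)) -> f != e0 -> arc_flow x y f = 0.
Proof.
case/orP => /eqP ev fe0.
  have [-> ->] : x = (val e0).1 /\ y = (val e0).2 by rewrite ev.
  by rewrite arc_flow_edge (negbTE fe0).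
have [-> ->] : y = (val e0).1 /\ x = (val e0).2 by rewrite ev.
by rewrite arc_flowC arc_flow_edge (negbTE fe0) oppr0.
Qed.

Lemma cut_flow_arc S x y : adj d x y ->
  cut_flow S (arc_flow x y) = (x \in S)%:Z - (y \in S)%:Z.
Proof.
case/existsP => e0 /andP [_ /orP [] /eqP ev].
  have [-> ->] : x = (val e0).1 /\ y = (val e0).2 by rewrite ev.
  by rewrite (cut_flow_eq _ (arc_flow_edge e0)) cut_flow_edge.
have [-> ->] : y = (val e0).1 /\ x = (val e0).2 by rewrite ev.
rewrite (cut_flow_eq _ (fun e => arc_flowC _ _ e)) cut_flowN.
by rewrite (cut_flow_eq _ (arc_flow_edge e0)) cut_flow_edge opprB.
Qed.

Fixpoint walk_flow (x : V) (p : seq V) (e : E) : int :=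
  if p is y :: p' then arc_flow x y e + walk_flow y p' e else 0.

Lemma cut_flow_walk S x p : path (adj d) x p ->
  cut_flow S (walk_flow x p) = (x \in S)%:Z - (last x p \in S)%:Z.
Proof.
elim: p x => [|y p IHp] x /=; first by rewrite subrr => _; exact: circulation0.
case/andP => xy yp.
have -> : cut_flow S (walk_flow x (y :: p)) =
          cut_flow S (arc_flow x y) + cut_flow S (walk_flow y p) := cut_flowD S _ _.
by rewrite cut_flow_arc // IHp // addrA subrK.
Qed.

Lemma circulation_closed_walk x p : path (adj d) x p -> last x p = x ->
  circulation (walk_flow x p).
Proof. by move=> xp px S; rewrite cut_flow_walk // px subrr. Qed.

Lemma walk_flow_ge0 x p : path d x p -> forall e, 0 <= walk_flow x p e.
Proof.
elim: p x => [|y p IHp] x //= /andP [xy yp] e.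
rewrite addr_ge0 ?IHp //.
by have := arc_flow_edge (exist _ (x, y) xy : E) e; rewrite /= => ->.
Qed.

Lemma walk_flow_avoid (F : {set E}) x p f : path (adj_minus F) x p -> f \in F ->
  walk_flow x p f = 0.
Proof.
move=> + fF; elim: p x => [|y p IHp] x //= /andP [/existsP [e0 /andP [e0F xy]] yp].
rewrite IHp // addr0; apply: arc_flow_eq0 xy _.
by apply: contraNneq e0F => <-.
Qed.

Lemma adj_minusW (F : {set E}) : subrel (adj_minus F) (adj d).
Proof.
by move=> x y /existsP [e /andP [_ exy]]; apply/existsP; exists e; rewrite in_set0.
Qed.

Lemma arc_adj : subrel d (adj d).
Proof.
by move=> x y xy; apply/existsP; exists (exist _ (x, y) xy : E); rewrite in_set0 eqxx.
Qed.

Definition cycle_flow (e0 : E) (p : seq V) : E -> int :=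
  walk_flow (val e0).1 ((val e0).2 :: p).

Lemma cycle_flowE e0 p e : cycle_flow e0 p e = (e == e0)%:Z + walk_flow (val e0).2 p e.
Proof. by rewrite /cycle_flow /= arc_flow_edge. Qed.

Lemma circulation_cycle_flow e0 p : path (adj d) (val e0).2 p ->
  last (val e0).2 p = (val e0).1 -> circulation (cycle_flow e0 p).
Proof.
by move=> e0p pe0; apply: circulation_closed_walk => //=; rewrite arc_adj ?(valP e0).
Qed.

Lemma positive_cycle_flow : totally_cyclic d -> forall e0,
  exists2 h, circulation h & (forall e, 0 <= h e) /\ 0 < h e0.
Proof.
move=> tc e0; have /connectP [p e0p pe0] := tc _ _ (valP e0).
exists (cycle_flow e0 p).
  exact: circulation_cycle_flow (sub_path arc_adj e0p) (esym pe0).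
split=> [e|]; first by apply: walk_flow_ge0; rewrite /= (valP e0).
by rewrite cycle_flowE eqxx; have := walk_flow_ge0 e0p e0; lia.
Qed.

Lemma separating_cycle_flow : three_edge_connected d -> forall e f, e != f ->
  exists2 h, circulation h & h e = 1 /\ h f = 0.
Proof.
move=> tec e f ef.
have F2 : (#|[set e; f]| <= 2)%N by rewrite cards2 ltnS leq_b1.
have /connectP [p ep pe] := tec _ F2 (val e).2 (val e).1.
exists (cycle_flow e p).
  exact: circulation_cycle_flow (sub_path (@adj_minusW _) ep) (esym pe).
by rewrite !cycle_flowE !(walk_flow_avoid ep) ?inE ?eqxx ?orbT // eq_sym (negbTE ef).
Qed.

Lemma signed_cut_star v : signed_cut d (~: [set v]) = Cstar d v.
Proof.
rewrite /signed_cut /Cstar; congr pair; apply/setP => e; rewrite !inE negbK.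
- by have [<-|] := eqVneq (val e).2 v; rewrite ?eqxx ?andbF ?andbT ?arc_neq.
- by have [<-|] := eqVneq (val e).1 v; rewrite ?eqxx ?andbF ?andbT 1?eq_sym ?arc_neq.
Qed.

Lemma card_star_meet u v : u != v ->
  (#|ssupp (Cstar d u) :&: ssupp (Cstar d v)| <= 1)%N.
Proof.
move=> uv.
have ends e : e \in ssupp (Cstar d u) :&: ssupp (Cstar d v) ->
    val e = (u, v) \/ val e = (v, u).
  case: e => [[a b] ab]; rewrite /ssupp !inE /=.
  case/andP => /orP [] /eqP -> /orP [] /eqP eq.
  - by move: uv; rewrite eq eqxx.
  - by right; rewrite eq.
  - by left; rewrite eq.
  - by move: uv; rewrite eq eqxx.
apply/card_le1_eqP => e f /ends [] ev /ends [] fv; try by apply: val_inj; rewrite ev fv.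
- by move: (valP e) (d_asym (valP f)); rewrite ev fv /= => ->.
- by move: (valP e) (d_asym (valP f)); rewrite ev fv /= => ->.
Qed.
End Circulations.

Theorem lemmal (V : finType) (d : rel V) :
  no_loops d -> no_antiparallel d ->
  totally_cyclic d -> three_edge_connected d ->
  exists (prec : rel (Edge d)) (A : {set sset (Edge d)}),
    strict_partial prec /\ twisted d prec A.
Proof.
(* [no_loops] follows from [no_antiparallel]. *)
move=> _ d_asym tc tec.
have [w w_circ w_gt0] := exists_positive (circulation0 d) (@circulation_comb _ d)
  (positive_cycle_flow d_asym tc).
have [|g g_circ g_gen] :=
    exists_distinct_slopes (circulation0 d) (@circulation_comb _ d) (w := w).
  move=> e f /(separating_cycle_flow d_asym tec) [h h_circ [he hf]].
  by exists h; rewrite // he hf mul1r mul0r gt_eqF.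
have cut_scomp S : scomp_seq (enum (conformal_circuits (slope_lt w g) (signed_cut d S))) =
                   signed_cut d S.
  by apply: balanced_scomp; rewrite ?signed_cut_disjoint ?circulation_balance.
have cut_star v := signed_cut_star d_asym v.
exists (slope_lt w g), (\bigcup_v conformal_circuits (slope_lt w g) (Cstar d v)).
split; first by split; [exact: slope_lt_irr | exact: slope_lt_trans].
split => //.
- move=> X /bigcupP [v _]; rewrite inE => /and3P [Xcirc _ _] lt _ ext.
  exact: circuit_extends ext Xcirc.
- move=> lt _ ext X [S [_ _ ->]].
  exact: vector_conformal_circuits ext (signed_cut_disjoint d S) (cut_scomp S).
exists (fun v => conformal_circuits (slope_lt w g) (Cstar d v)); split => //.
- move=> u v uv; apply: conformal_circuits_disjoint (slope_lt_irr w g) _.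
  exact: card_star_meet.
- move=> v X Y; apply: conformal_circuits_conformal.
  by rewrite -cut_star signed_cut_disjoint.
- by move=> v; rewrite -cut_star cut_scomp.
Qed.
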